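(* Let $p\ge4$ and let $\vec r:\mathbb{Z}\to\mathbb{R}^3$ be a discrete centroaffine space curve which is closed with period $p$ and has $\tau_k=0$ for all $k$. Let $S$ be the $p\times p$ real matrix whose $n$-th row ($n=1,\dots,p$) has entry $\kappa_n$ in column $n-1$, entry $-\kappa_n-\bar\kappa_n$ in column $n$, entry $1+\bar\kappa_n$ in column $n+1$, entry $-1$ in column $n+2$ (column indices taken modulo $p$ in $\{1,\dots,p\}$), and zeros elsewhere. Then $\operatorname{rank}S=p-3$.
   Context: A discrete centroaffine space curve is a map $\vec r:\mathbb{Z}\to\mathbb{R}^3$ with $[\vec r_{k-1},\vec r_k,\vec r_{k+1}]\ne0$ for all $k$, where $\vec r_k=\vec r(k)$, $[\cdot,\cdot,\cdot]$ is the $3\times3$ determinant and $\vec t_k=\vec r_{k+1}-\vec r_k$. With $D_k=[\vec r_{k-1},\vec r_k,\vec r_{k+1}]$: $\kappa_k=\frac{[\vec r_k,\vec r_{k+1},\vec r_{k+2}]}{D_k}$, $\bar\kappa_k=\frac{[\vec r_{k+1},\vec t_{k-1},\vec t_{k+1}]}{D_k}$, $\tau_k=\frac{[\vec t_{k-1},\vec t_k,\vec t_{k+1}]}{D_k}$. Closed with period $p$: $\vec r(k+p)=\vec r(k)$ for all $k$, $p$ minimal. *)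

(* the statement is purely algebraic (determinants, rank),
   stated over an arbitrary real field R (the paper's case is R = reals). *)
From HB Require Import structures.
From mathcomp Require Import all_boot all_order all_algebra.
Set Implicit Arguments. Unset Strict Implicit. Unset Printing Implicit Defensive.
Import Order.TTheory GRing.Theory Num.Theory.
Local Open Scope ring_scope.

Definition det3 (R : realFieldType) (a b c : 'rV[R]_3) : R :=
  \det (\matrix_(i < 3, j < 3)
          (if i == 0 :> nat then a 0 j else if i == 1 :> nat then b 0 j else c 0 j)).

Section Curve.
Variable R : realFieldType.
Variable r : int -> 'rV[R]_3.

Definition tvec (k : int) : 'rV[R]_3 := r (k + 1) - r k.

Definition Dk (k : int) : R := det3 (r (k - 1)) (r k) (r (k + 1)).

Definition kappa (k : int) : R := det3 (r k) (r (k + 1)) (r (k + 2)) / Dk k.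

Definition kappabar (k : int) : R :=
  det3 (r (k + 1)) (tvec (k - 1)) (tvec (k + 1)) / Dk k.

Definition tau (k : int) : R := det3 (tvec (k - 1)) (tvec k) (tvec (k + 1)) / Dk k.

Definition centroaffine_curve : Prop := forall k : int, Dk k != 0.

Definition closed_with_period (p : nat) : Prop :=
  (0 < p)%N /\ (forall k : int, r (k + p%:Z) = r k) /\
  (forall q : nat, (0 < q)%N -> (q < p)%N -> exists k : int, r (k + q%:Z) <> r k).

Definition Smat (p : nat) : 'M[R]_p :=
  \matrix_(i < p, j < p)
    (let n : int := (i.+1)%:Z in
     if (j : nat) == ((i + p - 1) %% p)%N then kappa n
     else if (j : nat) == i then - kappa n - kappabar n
     else if (j : nat) == ((i + 1) %% p)%N then 1 + kappabar n
     else if (j : nat) == ((i + 2) %% p)%N then -1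
     else 0).
End Curve.

From HB Require Import structures.
From mathcomp Require Import all_boot all_order all_algebra.
From mathcomp Require Import ring zify.
Set Implicit Arguments. Unset Strict Implicit. Unset Printing Implicit Defensive.
Import Order.TTheory GRing.Theory Num.Theory.
Local Open Scope ring_scope.

(* When tau = 0, Cramer's rule expresses r_{k+2} in the basis r_{k-1}, r_k, r_{k+1} as
   r_{k+2} = kappa_k r_{k-1} - (kappa_k + kappabar_k) r_k + (1 + kappabar_k) r_{k+1}.
   By periodicity this says that S annihilates the p x 3 matrix with rows r_1, ..., r_p,
   which has rank 3 since [r_1, r_2, r_3] <> 0; hence rank S <= p - 3.  Conversely the
   minor of S on rows 2..p-2 and columns 4..p is lower triangular with diagonal -1,
   so rank S >= p - 3. *)

Lemma det_mx22 (R : comNzRingType) (M : 'M[R]_2) :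
  \det M = M 0 0 * M 1 1 - M 0 1 * M 1 0.
Proof.
rewrite (expand_det_row _ 0) !big_ord_recl big_ord0 /cofactor !det_mx11 !mxE /=.
pose N (a b : nat) := M (inord a) (inord b).
have HN i j : M i j = N i j by rewrite /N !inord_val.
by rewrite !HN /= /bump /=; ring.
Qed.

Lemma det_mx33 (R : comNzRingType) (M : 'M[R]_3) : \det M =
    M 0 0 * (M 1 1 * M 2 2 - M 1 2 * M 2 1)
  - M 0 1 * (M 1 0 * M 2 2 - M 1 2 * M 2 0)
  + M 0 2 * (M 1 0 * M 2 1 - M 1 1 * M 2 0).
Proof.
rewrite (expand_det_row _ 0) !big_ord_recl big_ord0 /cofactor !det_mx22 !mxE /=.
pose N (a b : nat) := M (inord a) (inord b).
have HN i j : M i j = N i j by rewrite /N !inord_val.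
by rewrite !HN /= /bump /=; ring.
Qed.

Lemma ord3P (j : 'I_3) : [\/ j = 0, j = 1 | j = 2].
Proof.
by case: j => [[|[|[|//]]] hj]; [constructor 1|constructor 2|constructor 3]; apply: val_inj.
Qed.

(* Cramer's rule in disguise: divided by [det3 a b c], the coefficients are the
   curvatures kappa, kappabar at b, and the error term is the torsion. *)
Lemma det3_recurrence (R : realFieldType) (a b c e : 'rV[R]_3) :
  det3 b c e *: a - (det3 b c e + det3 c (b - a) (e - c)) *: b
  + (det3 a b c + det3 c (b - a) (e - c)) *: c - det3 a b c *: e
  = - det3 (b - a) (c - b) (e - c) *: c.
Proof.
apply/rowP => j; rewrite !mxE /det3 !det_mx33 !mxE /=.
by case: (ord3P j) => ->; ring.
Qed.

Lemma tau0_recurrence (R : realFieldType) (r : int -> 'rV[R]_3) (k : int) :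
  centroaffine_curve r -> tau r k = 0 ->
  kappa r k *: r (k - 1) - (kappa r k + kappabar r k) *: r k
  + (1 + kappabar r k) *: r (k + 1) - r (k + 2) = 0.
Proof.
move=> hD htau.
have hk1 : k - 1 + 1 = k by rewrite subrK.
have hk2 : k + 1 + 1 = k + 2 by rewrite -addrA.
have hT : det3 (r k - r (k - 1)) (r (k + 1) - r k) (r (k + 2) - r (k + 1)) = 0.
  move/eqP: htau; rewrite /tau /tvec hk1 hk2 mulf_eq0 invr_eq0 (negbTE (hD k)).
  by rewrite orbF => /eqP.
have := det3_recurrence (r (k - 1)) (r k) (r (k + 1)) (r (k + 2)).
rewrite hT oppr0 scale0r /kappa /kappabar /tvec hk1 hk2 => /rowP rec.
have hDk : det3 (r (k - 1)) (r k) (r (k + 1)) != 0 := hD k.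
apply/rowP => j; move/(_ j): rec; rewrite !mxE /Dk => rec.
by apply: (mulfI hDk); rewrite mulr0 -rec; field.
Qed.

Lemma sum_ord_indicator (R : comNzRingType) n (v : nat) (F : 'I_n.+1 -> R) (x : R) :
  (v < n.+1)%N -> \sum_(c < n.+1) ((c : nat) == v)%:R * x * F c = x * F (inord v).
Proof.
move=> hv; rewrite (bigD1 (inord v)) //= inordK // eqxx mul1r big1 ?addr0 // => c hc.
have /negbTE -> : (c : nat) != v.
  by apply: contra hc => /eqP hc; apply/eqP/val_inj; rewrite /= inordK.
by rewrite !mul0r.
Qed.

Lemma sum_ord_if4 (R : comNzRingType) n (F : 'I_n.+1 -> R) (v1 v2 v3 v4 : nat)
    (x1 x2 x3 x4 : R) :
  (v1 < n.+1)%N -> (v2 < n.+1)%N -> (v3 < n.+1)%N -> (v4 < n.+1)%N ->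
  uniq [:: v1; v2; v3; v4] ->
  \sum_(c < n.+1) (if (c : nat) == v1 then x1 else if (c : nat) == v2 then x2
     else if (c : nat) == v3 then x3 else if (c : nat) == v4 then x4 else 0) * F c =
  x1 * F (inord v1) + x2 * F (inord v2) + x3 * F (inord v3) + x4 * F (inord v4).
Proof.
move=> h1 h2 h3 h4 /=; rewrite !inE !negb_or.
move=> /and4P[/and3P[d12 d13 d14] /andP[d23 d24] d34 _].
rewrite -!sum_ord_indicator // -!big_split /=; apply: eq_bigr => c _.
have [->|_] := eqVneq (c : nat) v1.
  by rewrite (negbTE d12) (negbTE d13) (negbTE d14) /=; ring.
have [->|_] := eqVneq (c : nat) v2.
  by rewrite (negbTE d23) (negbTE d24) /=; ring.
have [->|_] := eqVneq (c : nat) v3.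
  by rewrite (negbTE d34) /=; ring.
by case: eqP => _ /=; ring.
Qed.

Lemma mxrank_mxsub (F : fieldType) m n m' n' (f : 'I_m' -> 'I_m) (g : 'I_n' -> 'I_n)
    (A : 'M[F]_(m, n)) :
  (\rank (mxsub f g A) <= \rank A)%N.
Proof.
rewrite mxsubrc; apply: leq_trans (mxrankS (rowsub_sub f _)) _.
by rewrite -{1}[A]mulmx1 -mulmx_colsub mxrankM_maxl.
Qed.

Lemma mxrank_mul_eq0 (F : fieldType) m n k (A : 'M[F]_(m, n)) (B : 'M[F]_(n, k)) :
  A *m B = 0 -> (\rank A + \rank B <= n)%N.
Proof. by move=> hAB; have := mxrank_mul_min A B; rewrite hAB mxrank0; lia. Qed.

Lemma uniq_modnDl (p i : nat) (s : seq nat) :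
  all (fun t => t < p)%N s -> uniq s -> uniq [seq ((i + t) %% p)%N | t <- s].
Proof.
elim: s => //= t s IH /andP[ht hs] /andP[hts us]; rewrite IH // andbT.
apply: contra hts => /mapP[u hu /eqP]; rewrite eqn_modDl !modn_small //.
  by move/eqP->.
exact: (allP hs).
Qed.

Section ClosedCurve.
Variables (R : realFieldType) (n : nat) (r : int -> 'rV[R]_3).
(* The period is written [n.+1] so that [inord] is available on ['I_p]. *)
Local Notation p := n.+1.

Definition curve_points : 'M[R]_(p, 3) := \matrix_(i, j) r (i.+1)%:Z 0 j.

Lemma rank_curve_points : (2 <= n)%N -> centroaffine_curve r -> (3 <= \rank curve_points)%N.
Proof.
move=> hn hD; pose f (k : 'I_3) : 'I_p := inord k.
have hf : rowsub f curve_points = \matrix_(i < 3, j < 3)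
    (if i == 0 :> nat then r 1 0 j else if i == 1 :> nat then r 2 0 j else r 3 0 j).
  apply/matrixP => i j; rewrite !mxE /f inordK; last by have := ltn_ord i; lia.
  by case: (ord3P i) => ->.
have hunit : rowsub f curve_points \in unitmx by rewrite unitmxE unitfE hf; exact: (hD 2).
by have := mxrankS (rowsub_sub f curve_points); rewrite mxrank_unit.
Qed.

Lemma Smat_rank_ge : (p - 3 <= \rank (Smat r p))%N.
Proof.
pose f (a : 'I_(p - 3)) : 'I_p := inord a.+1.
pose g (b : 'I_(p - 3)) : 'I_p := inord (b + 3).
pose M := mxsub f g (Smat r p).
have M_band a b : M a b =
    if (b + 3 == a)%N then kappa r (Posz a.+2)
    else if (b + 3 == a.+1)%N then - kappa r (Posz a.+2) - kappabar r (Posz a.+2)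
    else if (b + 3 == a + 2)%N then 1 + kappabar r (Posz a.+2)
    else if (b + 3 == a + 3)%N then -1 else 0.
  have ha := ltn_ord a; have hb := ltn_ord b.
  rewrite /M !mxE /f /g !inordK; [|lia|lia].
  have -> : ((a.+1 + p - 1) %% p = a)%N.
    by rewrite addSn subSS subn0 modnDr modn_small //; lia.
  have -> : ((a.+1 + 1) %% p = a + 2)%N by rewrite modn_small; lia.
  by have -> : ((a.+1 + 2) %% p = a + 3)%N by rewrite modn_small; lia.
have M_trig : is_trig_mx M.
  by apply/is_trig_mxP => a b hab; rewrite M_band; repeat (case: eqP => ?; first lia).
have M_diag a : M a a = -1.
  by rewrite M_band; do 3 (case: eqP => ?; first lia); rewrite eqxx.
have M_unit : M \in unitmx.
  rewrite unitmxE unitfE det_trig // (eq_bigr (fun _ => -1)) // prodr_const.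
  by rewrite expf_neq0 // oppr_eq0 oner_eq0.
by have := mxrank_mxsub f g (Smat r p); rewrite -/M mxrank_unit.
Qed.

Hypothesis r_periodic : forall k : int, r (k + p%:Z) = r k.

Lemma r_modn (m : nat) (c : int) : r ((m %% p)%N%:Z + c) = r (m%:Z + c).
Proof.
have r_mulp (q : nat) (k : int) : r (k + (q * p)%N%:Z) = r k.
  elim: q k => [|q IH] k; first by rewrite mul0n addr0.
  by rewrite mulSn PoszD addrA IH r_periodic.
rewrite -(r_mulp (m %/ p)%N); congr (r _).
by rewrite {3}(divn_eq m p) PoszD; ring.
Qed.

Lemma Smat_mul_curve_points : (3 <= n)%N -> centroaffine_curve r ->
  (forall k : int, tau r k = 0) -> Smat r p *m curve_points = 0.
Proof.
move=> hn hD htau; apply/matrixP => i j; rewrite !mxE.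
under eq_bigr => c _ do rewrite !mxE.
have hi := ltn_ord i.
rewrite /= addnS subSS subn0.
rewrite (sum_ord_if4 (fun c : 'I_p => r (Posz c.+1) 0 j)) ?ltn_pmod //; last first.
  have {2}-> : (i : nat) = ((i + 0) %% p)%N by rewrite addn0 modn_small.
  by apply: (@uniq_modnDl _ _ [:: n; 0; 1; 2]%N) => /=; rewrite ?inE; lia.
rewrite !inordK ?ltn_pmod //.
have r_succ_modn (m : nat) : r (Posz (m %% p).+1) = r (Posz m + 1).
  by rewrite -r_modn -[(m %% p).+1]addn1 PoszD.
rewrite !r_succ_modn.
have -> : r (Posz (i + n) + 1) = r (Posz i.+1 - 1).
  by rewrite -(r_periodic (Posz i.+1 - 1)); congr (r _); lia.
have -> : r (Posz (i + 1) + 1) = r (Posz i.+1 + 1) by congr (r _); lia.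
have -> : r (Posz (i + 2) + 1) = r (Posz i.+1 + 2) by congr (r _); lia.
have /rowP/(_ j) := tau0_recurrence hD (htau (Posz i.+1)).
by rewrite !mxE => <-; ring.
Qed.

Lemma Smat_rank_le : (3 <= n)%N -> centroaffine_curve r ->
  (forall k : int, tau r k = 0) -> (\rank (Smat r p) <= p - 3)%N.
Proof.
move=> hn hD htau.
have := mxrank_mul_eq0 (Smat_mul_curve_points hn hD htau).
have := rank_curve_points (ltnW hn) hD; lia.
Qed.

End ClosedCurve.

Theorem proposition6p5 (R : realFieldType) (p : nat) (r : int -> 'rV[R]_3) :
  (4 <= p)%N ->
  centroaffine_curve r ->
  closed_with_period r p ->
  (forall k : int, tau r k = 0) ->
  \rank (Smat r p) = (p - 3)%N.
Proof.
move=> hp hD [_ [hper _]] htau; case: p hp hper => [//|n] hp hper.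
by apply/eqP; rewrite eqn_leq Smat_rank_ge andbT Smat_rank_le.
Qed.
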